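(* Let $\Gamma$ be a group. For every finite symmetric subset $S\subseteq\Gamma$ we have $N'(\mathbf{1}_S)=e(\Gamma,S)\,|S|$.
   Context: For $f\colon\Gamma\to\mathbf{C}$, $N'(f)=\sup_F\frac1{|F|}\sum_{a,b\in F}|f(a^{-1}b)|$, the supremum over all non-empty finite $F\subseteq\Gamma$. $\mathrm{Cay}(\Gamma,S)$ is the graph with vertex set $\Gamma$ and an edge between $g$ and $gs$ for each $s\in S$; $\partial_SF$ is the set of edges joining a finite set $F$ to its complement; $h(\Gamma,S)=\inf_F|\partial_SF|/|F|$ over non-empty finite $F$; $e(\Gamma,S)=1-h(\Gamma,S)/|S|$. *)

From HB Require Import structures.
From mathcomp Require Import all_boot all_order all_algebra.
From mathcomp Require Import monoid.
From mathcomp Require Import finmap.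
From mathcomp Require Import all_classical all_reals.
From mathcomp Require Import ereal.

Set Implicit Arguments.
Unset Strict Implicit.
Unset Printing Implicit Defensive.

Import Order.TTheory GRing.Theory Num.Theory.
Local Open Scope fset_scope.
Local Open Scope ring_scope.

Definition symmetric_fset (G : groupType) (S : {fset G}) : Prop :=
  forall s, s \in S -> (s^-1)%g \in S.

Definition Nprime (R : realType) (G : groupType) (V : normedZmodType R)
    (f : G -> V) : \bar R :=
  ereal_sup [set x : \bar R | exists F : {fset G}, F != fset0 /\
     x = ((#|` F|%:R)^-1 * \sum_(a <- F) \sum_(b <- F) `|f (a^-1 * b)%g|)%:E].

Definition indic (R : realType) (G : groupType) (S : {fset G}) (g : G) : R :=
  if g \in S then 1 else 0.

(* ∂_S F: edges of Cay(Γ,S) joining F to its complement.  Each such edge    *)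
(* {g, g s} with g ∈ F, g s ∉ F is represented by the ordered pair          *)
(* (g, g s) (its orientation leaving F), which determines it uniquely.      *)
Definition edge_boundary (G : groupType) (S F : {fset G}) : {fset G * G} :=
  [fset p | p in F `*` [fset (g * s)%g | g in F, s in S] &
            ((p.1^-1 * p.2)%g \in S) && (p.2 \notin F)].

Definition cheeger (R : realType) (G : groupType) (S : {fset G}) : R :=
  inf [set r : R | exists F : {fset G}, F != fset0 /\
     r = (#|` edge_boundary S F|%:R) / (#|` F|%:R)].

Definition econst (R : realType) (G : groupType) (S : {fset G}) : R :=
  1 - cheeger R S / (#|` S|%:R).

(* Each a in F has |S| neighbours a s in Cay(Γ,S): those inside F are counted
   by the sum over b in F of 1_S(a^-1 b), those outside are the boundary edges
   leaving a.  Summing over a in F gives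
   sum_{a,b in F} 1_S(a^-1 b) + |∂_S F| = |F| |S|, so the average in N'(1_S)
   equals |S| - |∂_S F|/|F|, and the supremum over F of this is
   |S| - h(Γ,S) = e(Γ,S) |S|. *)

From HB Require Import structures.
From mathcomp Require Import all_boot all_order all_algebra.
From mathcomp Require Import monoid finmap.
From mathcomp Require Import all_classical all_reals ereal.
Import Order.TTheory GRing.Theory Num.Theory.
Local Open Scope fset_scope.

Lemma count_mem_uniqC (T : eqType) (s1 s2 : seq T) :
  uniq s1 -> uniq s2 -> count (mem s2) s1 = count (mem s1) s2.
Proof.
move=> s1_uniq s2_uniq; rewrite -!size_filter; apply/perm_size/uniq_perm.
- exact: filter_uniq.
- exact: filter_uniq.
by move=> x; rewrite !mem_filter andbC.
Qed.

Section CayleyCounting.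
Variables (G : groupType) (S F : {fset G}).

Lemma count_translate (a : G) :
  count (fun b => (a^-1 * b)%g \in S) F = count (fun s => (a * s)%g \in F) S.
Proof.
have mem_translate b : (b \in map (mul a) S) = ((a^-1 * b)%g \in S).
  by rewrite -{1}(mulVKg a b) (mem_map (mulgI a)).
rewrite -(eq_count mem_translate) count_mem_uniqC ?fset_uniq ?count_map //.
by rewrite (map_inj_uniq (mulgI a)) fset_uniq.
Qed.

Lemma edge_boundaryE :
  edge_boundary S F =
  [fset (a, (a * s)%g) | a in F, s in [fset s in S | (a * s)%g \notin F]].
Proof.
apply/fsetP => -[b c]; rewrite !inE /=; apply/idP/idP.
  case/and3P => /andP[bF _] bcS cF.
  apply/(@imfset2P _ _ G (fun=> G)); exists b => //; exists (b^-1 * c)%g.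
    by rewrite !inE bcS mulVKg.
  by rewrite mulVKg.
case/(@imfset2P _ _ G (fun=> G)) => a aF [s]; rewrite !inE => /andP[sS asF].
case=> -> ->; rewrite mulKg sS asF aF !andbT /=.
by apply/(@imfset2P _ _ G (fun=> G)); exists a => //; exists s.
Qed.

Lemma card_edge_boundary :
  #|` edge_boundary S F| = (\sum_(a <- F) count (fun s => (a * s)%g \notin F) S)%N.
Proof.
rewrite edge_boundaryE card_fset_sum1 big_imfset2 /=; last first.
  by move=> [a s] [a' s'] _ _ [<-] /mulgI ->.
by apply: eq_bigr => a _; rewrite big_fset /= sum1_count.
Qed.

Lemma count_inner_add_card_edge_boundary :
  (\sum_(a <- F) count (fun b => (a^-1 * b)%g \in S) F + #|` edge_boundary S F|)%N
  = (#|` F| * #|` S|)%N.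
Proof.
rewrite card_edge_boundary -big_split card_fset_sum1 big_distrl /=.
by apply: eq_bigr => a _; rewrite count_translate count_predC mul1n.
Qed.

Lemma card_edge_boundary_le : (#|` edge_boundary S F| <= #|` F| * #|` S|)%N.
Proof. by rewrite -count_inner_add_card_edge_boundary leq_addl. Qed.

End CayleyCounting.

Local Open Scope ring_scope.
Local Open Scope classical_set_scope.

Lemma sup_sub_inf (R : realType) (c : R) (A : set R) :
  A !=set0 -> has_lbound A -> sup [set c - r | r in A] = c - inf A.
Proof.
move=> [r Ar] [m mA].
have -> : [set c - r | r in A] = [set x + y | x in [set c] & y in -%R @` A].
  apply/seteqP; split => x.
    by move=> [r' Ar' <-]; exists c => //; exists (- r') => //; exists r'.
  by move=> [_ -> [_ [r' Ar' <-] <-]]; exists r'.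
rewrite sup_sumE ?sup1 /inf ?opprK //.
split; first by exists (- r), r.
by exists (- m) => _ [r' Ar' <-]; rewrite lerN2 mA.
Qed.

Definition boundary_ratios (R : realType) {G : groupType} (S : {fset G}) : set R :=
  [set r | exists F : {fset G}, F != fset0 /\
     r = (#|` edge_boundary S F|%:R) / (#|` F|%:R)].

Section IndicatorOfGenerators.
Variables (R : realType) (G : groupType) (S : {fset G}).

Lemma sum_norm_indic (F : {fset G}) (a : G) :
  \sum_(b <- F) `|indic R S (a^-1 * b)%g| = (count (fun b => (a^-1 * b)%g \in S) F)%:R.
Proof.
rewrite -sum1_count natr_sum [RHS]big_mkcond; apply: eq_bigr => b _.
by rewrite /indic; case: ifP; rewrite ?normr1 ?normr0.
Qed.

Lemma mean_norm_indic (F : {fset G}) : F != fset0 ->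
  (#|` F|%:R)^-1 * \sum_(a <- F) \sum_(b <- F) `|indic R S (a^-1 * b)%g|
  = #|` S|%:R - (#|` edge_boundary S F|%:R) / (#|` F|%:R).
Proof.
move=> F_neq0; have cardF_neq0 : (#|` F|%:R : R) != 0.
  by rewrite pnatr_eq0 cardfs_eq0.
apply: (mulfI cardF_neq0); rewrite mulrA divff // mul1r mulrBr mulrCA divff // mulr1.
rewrite -natrM -count_inner_add_card_edge_boundary natrD natr_sum addrK.
by apply: eq_bigr => a _; rewrite sum_norm_indic.
Qed.

Lemma boundary_ratios_neq0 : boundary_ratios R S !=set0.
Proof.
exists ((#|` edge_boundary S [fset 1%g]|%:R) / (#|` [fset (1%g : G)]|%:R)).
by exists [fset 1%g]; split => //; apply/eqP => /fsetP/(_ 1%g); rewrite !inE eqxx.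
Qed.

Lemma boundary_ratio_ge0 {r : R} : boundary_ratios R S r -> 0 <= r.
Proof. by move=> [F [_ ->]]; rewrite divr_ge0. Qed.

Lemma boundary_ratio_le_card {r : R} : boundary_ratios R S r -> r <= #|` S|%:R.
Proof.
move=> [F [F_neq0 ->]]; have cardF_gt0 : (0 : R) < #|` F|%:R.
  by rewrite ltr0n cardfs_gt0.
by rewrite ler_pdivrMr // mulrC -natrM ler_nat card_edge_boundary_le.
Qed.

Lemma cheeger_ge0 : 0 <= cheeger R S.
Proof.
apply: lb_le_inf; first exact: boundary_ratios_neq0.
by move=> r; exact: boundary_ratio_ge0.
Qed.

Lemma cheeger_le_card : cheeger R S <= #|` S|%:R.
Proof.
have [r Ar] := boundary_ratios_neq0.
apply: le_trans (boundary_ratio_le_card Ar); apply: ge_inf => //.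
by exists 0 => r'; exact: boundary_ratio_ge0.
Qed.

(* For S empty the division in econst is by 0, but then h(Γ,S) = 0 as well. *)
Lemma econst_mul_card : econst R S * #|` S|%:R = #|` S|%:R - cheeger R S.
Proof.
have [S0|S_neq0] := eqVneq (#|` S|%:R : R) 0; last by rewrite mulrBl mul1r divfK.
have cheeger0 : cheeger R S = 0.
  by apply/le_anti; rewrite cheeger_ge0 andbT -[X in _ <= X]S0 cheeger_le_card.
by rewrite S0 cheeger0 mulr0 subr0.
Qed.

Lemma Nprime_indicE : Nprime (indic R S) =
  ereal_sup (EFin @` [set #|` S|%:R - r | r in boundary_ratios R S]).
Proof.
congr ereal_sup; apply/seteqP; split => x.
  move=> [F [F_neq0 ->]]; rewrite mean_norm_indic //.
  by do 2 apply: imageP; exists F.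
by move=> [_ [_ [F [F_neq0 ->]] <-] <-]; exists F; rewrite mean_norm_indic.
Qed.

End IndicatorOfGenerators.

Theorem proposition4p2 (R : realType) (G : groupType) (S : {fset G}) :
  symmetric_fset S ->
  Nprime (indic R S) = (econst R S * (#|` S|%:R))%:E.
Proof.
move=> _; rewrite Nprime_indicE econst_mul_card (@ereal_sup_EFin R) ?sup_sub_inf //.
- exact: boundary_ratios_neq0.
- by exists 0 => r; exact: boundary_ratio_ge0.
- exists #|` S|%:R => _ [r Ar <-]; rewrite lerBlDr lerDl.
  by move: Ar; exact: boundary_ratio_ge0.
- by have [r Ar] := boundary_ratios_neq0 R G S; exists (#|` S|%:R - r), r.
Qed.
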